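(* Let $\varepsilon>0$ and $p\in(0,1]$. Let $G$ be an $n$-vertex graph with $e(G)\geq 2n/\varepsilon$ and let $\mu\in\mathcal{M}_{1,p}(G)$. Then \[\mathbb{P}\left[e(\mathbf{G}_\mu)\leq(1-3\varepsilon)p\,e(G)\right]\leq 4n\exp\left(-\frac{\varepsilon^3 p\, e(G)}{6n}\right).\]
   Context: A random graph model on $G$ is a probability measure $\mu$ on subsets of $E(G)$, and $\mathbf{G}_\mu$ is the random spanning subgraph with edge set distributed according to $\mu$. $\mu$ is $1$-independent if for all sets $A,B\subseteq E(G)$ whose edges span disjoint vertex sets, $E(\mathbf{G}_\mu)\cap A$ and $E(\mathbf{G}_\mu)\cap B$ are independent. $\mathcal{M}_{1,p}(G)$ is the set of $1$-independent measures on $G$ in which each edge is present with probability exactly $p$. *)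

From mathcomp Require Import all_boot all_order all_algebra.
From mathcomp Require Import reals.
From mathcomp Require Import sequences.
From mathcomp.analysis Require Import exp.
Set Implicit Arguments. Unset Strict Implicit. Unset Printing Implicit Defensive.
Import Order.TTheory GRing.Theory Num.Theory.
Local Open Scope ring_scope.

Definition simple_graph (V : finType) (E : {set {set V}}) : Prop :=
  forall f, f \in E -> #|f| = 2%N.

Definition span_vertices (V : finType) (A : {set {set V}}) : {set V} :=
  \bigcup_(f in A) f.

(* A random graph model on G = (V,E): a probability measure mu on the
   (finite) family of subsets of E.  mu S is the probability that the
   random edge set equals S. *)
Definition random_graph_model (R : realType) (V : finType)
    (E : {set {set V}}) (mu : {set {set V}} -> R) : Prop :=
  (forall S : {set {set V}}, 0 <= mu S) /\
  (forall S : {set {set V}}, ~~ (S \subset E) -> mu S = 0) /\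
  \sum_(S : {set {set V}}) mu S = 1.

Definition prob (R : realType) (V : finType) (mu : {set {set V}} -> R)
    (P : pred {set {set V}}) : R :=
  \sum_(S : {set {set V}} | P S) mu S.

Definition one_independent (R : realType) (V : finType)
    (E : {set {set V}}) (mu : {set {set V}} -> R) : Prop :=
  forall A B : {set {set V}}, A \subset E -> B \subset E ->
    [disjoint span_vertices A & span_vertices B] ->
    forall SA SB : {set {set V}},
      prob mu (fun S => (S :&: A == SA) && (S :&: B == SB)) =
      prob mu (fun S => S :&: A == SA) * prob mu (fun S => S :&: B == SB).

Definition M1p (R : realType) (V : finType) (E : {set {set V}}) (p : R)
    (mu : {set {set V}} -> R) : Prop :=
  random_graph_model E mu /\ one_independent E mu /\
  (forall f, f \in E -> prob mu (fun S => f \in S) = p).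

From mathcomp Require Import all_boot all_order all_algebra.
From mathcomp Require Import reals.
From mathcomp Require Import sequences.
From mathcomp.analysis Require Import exp.
From mathcomp Require Import ring lra.
Import Order.TTheory GRing.Theory Num.Theory.
Local Open Scope ring_scope.
Set Implicit Arguments. Unset Strict Implicit. Unset Printing Implicit Defensive.

(* Number the vertices 0, ..., n-1 and colour the edge {u, v} by u + v mod n:
   two edges of the same colour sharing an endpoint share the other one too,
   so each colour class is a matching.  Under a 1-independent model the edges
   of a matching are mutually independent, hence Chernoff's bound applies to
   every class: a class with at least eps e(G)/n edges keeps at most a
   (1-eps) p fraction of them with probability at most
   exp(-eps^3 p e(G)/(4n)).  The smaller classes hold at most eps e(G) edges
   in total, so if no large class deviates, G_mu keeps at least
   (1-eps)^2 p e(G) > (1-3eps) p e(G) edges.  A union bound over the n colours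
   concludes; the hypothesis e(G) >= 2n/eps is only used to get e(G) > 0. *)

Lemma expRN_le_quadratic (R : realType) (t : R) :
  0 <= t -> expR (- t) <= 1 - t + t ^+ 2.
Proof.
move=> t_ge0.
have le1 : expR (- t) * (1 + t) <= 1.
  rewrite -[X in _ <= X](expRxMexpNx_1 t) mulrC ler_wpM2r ?expR_ge0 //.
  exact: expR_ge1Dx.
rewrite -(ler_pM2r (_ : 0 < 1 + t)); last by lra.
by apply: le_trans le1 _; nra.
Qed.

Lemma sumr_const_le (R : numDomainType) (I : finType) (P : pred I) (K : R) :
  0 <= K -> \sum_(i | P i) K <= #|I|%:R * K.
Proof.
move=> K_ge0; rewrite mulr_natl -sumr_const [X in _ <= X](bigID P) /= lerDl.
exact: sumr_ge0.
Qed.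

Lemma large_parts_sum_ge (R : realFieldType) (I : finType) (m x : I -> R)
    (eps p : R) :
  (0 < #|I|)%N -> 0 <= eps <= 1 -> 0 <= p ->
  (forall i, 0 <= m i) -> (forall i, 0 <= x i) ->
  (forall i, eps * (\sum_j m j) / #|I|%:R <= m i ->
    (1 - eps) * p * m i <= x i) ->
  (1 - eps) ^+ 2 * p * \sum_i m i <= \sum_i x i.
Proof.
move=> I_gt0 /andP[eps_ge0 eps_le1] p_ge0 m_ge0 x_ge0 large_x.
set e := \sum_i m i; set t := eps * e / #|I|%:R.
have t_ge0 : 0 <= t by rewrite !mulr_ge0 ?sumr_ge0 ?invr_ge0.
have small : \sum_(i | m i < t) m i <= eps * e.
  have -> : eps * e = #|I|%:R * t.
    by rewrite /t [RHS]mulrC divfK // pnatr_eq0 -lt0n.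
  by apply: le_trans (sumr_const_le _ t_ge0); apply: ler_sum => i /ltW.
have large : (1 - eps) * p * \sum_(i | ~~ (m i < t)) m i <=
             \sum_(i | ~~ (m i < t)) x i.
  by rewrite mulr_sumr; apply: ler_sum => i; rewrite -leNgt; apply: large_x.
have x_large : \sum_(i | ~~ (m i < t)) x i <= \sum_i x i.
  by rewrite [X in _ <= X](bigID (fun i => m i < t)) /= lerDr sumr_ge0.
have e_split : e = \sum_(i | m i < t) m i + \sum_(i | ~~ (m i < t)) m i.
  exact: bigID.
have : (1 - eps) * p * ((1 - eps) * e) <=
       (1 - eps) * p * \sum_(i | ~~ (m i < t)) m i.
  by rewrite ler_wpM2l ?mulr_ge0 ?subr_ge0 //; lra.
lra.
Qed.

Definition matching (V : finType) (M : {set {set V}}) : Prop :=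
  forall f g, f \in M -> g \in M -> f != g -> [disjoint f & g].

Section Expectation.
Variables (R : realType) (V : finType) (mu : {set {set V}} -> R).

Definition expectation (F : {set {set V}} -> R) : R := \sum_S mu S * F S.

Lemma expectation_comp (T : finType) (g : {set {set V}} -> T) (F : T -> R) :
  expectation (fun S => F (g S)) = \sum_j F j * prob mu (fun S => g S == j).
Proof.
rewrite /expectation (partition_big g predT) //=; apply: eq_bigr => j _.
by rewrite /prob mulr_sumr; apply: eq_bigr => S /eqP ->; rewrite mulrC.
Qed.

Hypothesis mu_ge0 : forall S, 0 <= mu S.

Lemma prob_subset (P Q : pred {set {set V}}) :
  (forall S, P S -> Q S) -> prob mu P <= prob mu Q.
Proof.
move=> PQ; rewrite /prob [X in X <= _]big_mkcond [X in _ <= X]big_mkcond /=.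
apply: ler_sum => S _; case: ifP => [/PQ -> //|_]; by case: ifP.
Qed.

Lemma prob_exists_le (I : finType) (L : pred I) (B : I -> pred {set {set V}}) :
  prob mu (fun S => [exists i, L i && B i S]) <= \sum_(i | L i) prob mu (B i).
Proof.
rewrite /prob (exchange_big_dep predT) //= [X in X <= _]big_mkcond /=.
apply: ler_sum => S _; case: ifP => [/existsP[i /andP[Li Bi]]|_]; last first.
  exact: sumr_ge0.
by rewrite (bigD1 i) /= ?Li ?Bi // lerDl sumr_ge0.
Qed.

Lemma prob_le_expectation (P : pred {set {set V}}) (F : {set {set V}} -> R) :
  (forall S, 0 <= F S) -> (forall S, P S -> 1 <= F S) ->
  prob mu P <= expectation F.
Proof.
move=> F_ge0 F_ge1; rewrite /prob /expectation [X in _ <= X](bigID P) /=.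
rewrite -[X in X <= _]addr0 lerD ?sumr_ge0 // => [|S _]; last exact: mulr_ge0.
by apply: ler_sum => S /F_ge1; apply: ler_peMr.
Qed.

Section Independence.
Variable E : {set {set V}}.
Hypothesis indep : one_independent E mu.

Lemma expectation_mul_indep (A B : {set {set V}}) (F G : {set {set V}} -> R) :
  A \subset E -> B \subset E ->
  [disjoint span_vertices A & span_vertices B] ->
  expectation (fun S => F (S :&: A) * G (S :&: B)) =
  expectation (fun S => F (S :&: A)) * expectation (fun S => G (S :&: B)).
Proof.
move=> sAE sBE dAB.
rewrite (expectation_comp (fun S => (S :&: A, S :&: B))
  (fun j => F j.1 * G j.2)).
rewrite !expectation_comp big_distrlr pair_bigA /=.
apply: eq_bigr => -[SA SB] _ /=.
by rewrite -mulrACA -indep.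
Qed.

Variable p : R.
Hypothesis mu_sum1 : \sum_S mu S = 1.
Hypothesis edge_prob : forall f, f \in E -> prob mu (fun S => f \in S) = p.

Lemma expectation_pow_mem (x : R) f : f \in E ->
  expectation (fun S => x ^+ (f \in S)) = 1 - p + p * x.
Proof.
move=> fE; rewrite /expectation (bigID (fun S : {set {set V}} => f \in S)) /=.
have <- : prob mu (fun S => f \notin S) = 1 - p.
  rewrite -(edge_prob fE) -mu_sum1 /prob.
  by rewrite [in RHS](bigID (fun S : {set {set V}} => f \in S)) /= addrC addrK.
rewrite -(edge_prob fE) /prob mulr_suml addrC; congr (_ + _).
  by apply: eq_bigr => S /negbTE ->; rewrite mulr1.
by apply: eq_bigr => S ->.
Qed.

Lemma expectation_pow_card_matching (x : R) (M : {set {set V}}) :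
  M \subset E -> matching M ->
  expectation (fun S => x ^+ #|S :&: M|) = (1 - p + p * x) ^+ #|M|.
Proof.
have [n] := ubnP #|M|; elim: n M => // n IH M /ltnSE leMn sME matchM.
have [-> | [f fM]] := set_0Vmem M.
  rewrite cards0 expr0 -mu_sum1; apply: eq_bigr => S _.
  by rewrite setI0 cards0 mulr1.
have fE : f \in E := subsetP sME f fM.
have cardM : #|M| = #|M :\ f|.+1 by rewrite (cardsD1 f M) fM.
have sM'E : M :\ f \subset E := subset_trans (subD1set M f) sME.
have matchM' : matching (M :\ f).
  by move=> g h /setD1P[_ gM] /setD1P[_ hM]; apply: matchM.
have disj_f : [disjoint span_vertices [set f] & span_vertices (M :\ f)].
  rewrite /span_vertices big_set1; apply: bigcup_disjoint => g /setD1P[gf gM].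
  by apply: matchM; rewrite // eq_sym.
transitivity (expectation (fun S => x ^+ (f \in S :&: [set f]) *
                                    x ^+ #|S :&: (M :\ f)|)).
  apply: eq_bigr => S _; rewrite in_setI in_set1 eqxx andbT -exprD.
  by rewrite (cardsD1 f (S :&: M)) in_setI fM andbT setIDA.
rewrite (expectation_mul_indep (fun T => x ^+ (f \in T)) (fun T => x ^+ #|T|))
  ?sub1set //=.
rewrite IH -?cardM // cardM exprS; congr (_ * _).
rewrite -(expectation_pow_mem x fE); apply: eq_bigr => S _.
by rewrite in_setI in_set1 eqxx andbT.
Qed.

Lemma chernoff_matching_exp (M : {set {set V}}) (t a : R) :
  M \subset E -> matching M -> 0 <= t ->
  prob mu (fun S => #|S :&: M|%:R <= a) <=
  expR (t * a) * (1 - p + p * expR (- t)) ^+ #|M|.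
Proof.
move=> sME matchM t_ge0.
pose F S := expR (t * (a - #|S :&: M|%:R)).
apply: le_trans (prob_le_expectation (F := F) _ _) _ => [S | S /= le_a |].
- exact: expR_ge0.
- by apply: le_trans (expR_ge1Dx _); rewrite lerDl mulr_ge0 // subr_ge0.
have -> : expectation F =
    expR (t * a) * expectation (fun S => expR (- t) ^+ #|S :&: M|).
  rewrite /expectation mulr_sumr; apply: eq_bigr => S _.
  by rewrite -expRM_natl mulrCA -expRD; congr (_ * expR _); ring.
by rewrite expectation_pow_card_matching.
Qed.

Lemma chernoff_matching (M : {set {set V}}) (eps : R) :
  M \subset E -> matching M -> 0 <= eps -> 0 <= p -> p <= 1 ->
  prob mu (fun S => #|S :&: M|%:R <= (1 - eps) * p * #|M|%:R) <=
  expR (- (eps ^+ 2 * p * #|M|%:R / 4)).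
Proof.
move=> sME matchM eps_ge0 p_ge0 p_le1.
set m := #|M|%:R; set t := eps / 2.
have t_ge0 : 0 <= t by rewrite divr_ge0.
apply: le_trans (chernoff_matching_exp _ sME matchM t_ge0) _.
set y := expR (- t).
have y_ge0 : 0 <= y := expR_ge0 _.
have y_le : y <= 1 - t + t ^+ 2 := expRN_le_quadratic t_ge0.
apply: le_trans (_ : expR (t * ((1 - eps) * p * m)) *
                     expR (- (p * (1 - y))) ^+ #|M| <= _).
  rewrite ler_wpM2l ?expR_ge0 // lerXn2r ?nnegrE ?expR_ge0 //; first nra.
  by apply: le_trans (expR_ge1Dx _); lra.
rewrite -expRM_natr -expRD ler_expR.
have pm_ge0 : 0 <= p * m by rewrite mulr_ge0.
rewrite /t in y_le *; nra.
Qed.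

End Independence.
End Expectation.

Section ColourClasses.
Variables (V : finType) (E : {set {set V}}) (I : finType) (col : {set V} -> I).

Definition colour_class (i : I) : {set {set V}} := [set f in E | col f == i].

Lemma colour_class_sub i : colour_class i \subset E.
Proof. by apply/subsetP => f; rewrite inE => /andP[]. Qed.

Lemma sum_card_colour_class (T : {set {set V}}) :
  (\sum_i #|T :&: colour_class i|)%N = #|T :&: E|.
Proof.
rewrite -[#|T :&: E|]sum1_card (partition_big col predT) //=.
apply: eq_bigr => i _; rewrite -sum1_card; apply: eq_bigl => f.
by rewrite !inE andbA.
Qed.

End ColourClasses.

Section SumColouring.
Variables (V : finType) (E : {set {set V}}).
Hypotheses (simpleE : simple_graph E) (n_gt0 : (0 < #|V|)%N).

Definition sum_colour (f : {set V}) : 'I_#|V| :=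
  Ordinal (ltn_pmod (\sum_(v in f) enum_rank v) n_gt0).

Lemma edgeD1_set1 f w : f \in E -> w \in f -> exists a, f :\ w = [set a].
Proof.
move=> fE wf; apply/cards1P.
by move: (simpleE fE); rewrite (cardsD1 w f) wf add1n => -[->].
Qed.

Lemma sum_colour_matching c : matching (colour_class E sum_colour c).
Proof.
move=> f g /setIdP[fE /eqP cf] /setIdP[gE /eqP cg] neq_fg.
apply/pred0P => w /=; apply/negP => /andP[wf wg].
have [a fw] := edgeD1_set1 fE wf; have [b gw] := edgeD1_set1 gE wg.
have : sum_colour f = sum_colour g by rewrite cf cg.
move/(congr1 val) => /= /eqP.
rewrite (big_setD1 _ wf) (big_setD1 _ wg) fw gw !big_set1 /= eqn_modDl.
rewrite !modn_small ?ltn_ord // => /eqP/val_inj/enum_rank_inj ab.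
by move/eqP: neq_fg; apply; rewrite -(setD1K wf) -(setD1K wg) fw gw ab.
Qed.

End SumColouring.

Section Deviation.
Variables (R : realFieldType) (V : finType) (E : {set {set V}}).
Variables (I : finType) (col : {set V} -> I) (eps p : R).

Definition large_class (i : I) : bool :=
  eps * #|E|%:R / #|I|%:R <= #|colour_class E col i|%:R.

Definition deviating_class (S : {set {set V}}) (i : I) : bool :=
  #|S :&: colour_class E col i|%:R <=
  (1 - eps) * p * #|colour_class E col i|%:R.

Lemma few_edges_large_class_deviates (S : {set {set V}}) :
  (0 < #|I|)%N -> (0 < #|E|)%N -> 0 < eps -> 0 < p ->
  #|S|%:R <= (1 - 3 * eps) * p * #|E|%:R ->
  [exists i, large_class i && deviating_class S i].
Proof.
move=> I_gt0 E_gt0 eps_gt0 p_gt0; apply: contraLR => /existsPn no_dev.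
rewrite -ltNge.
have pe_gt0 : 0 < p * #|E|%:R by rewrite mulr_gt0 ?ltr0n.
have [eps_le1 | eps_gt1] := lerP eps 1; last first.
  by apply: lt_le_trans (ler0n _ _); nra.
pose m i := #|colour_class E col i|%:R : R.
have sum_m : \sum_i m i = #|E|%:R.
  rewrite -natr_sum -[in RHS](setTI E) -(sum_card_colour_class _ col).
  by under [in RHS]eq_bigr do rewrite setTI.
have lower : (1 - eps) ^+ 2 * p * #|E|%:R <= #|S :&: E|%:R :> R.
  have := @large_parts_sum_ge R I m (fun i => #|S :&: colour_class E col i|%:R)
    eps p I_gt0.
  rewrite sum_m -natr_sum sum_card_colour_class; apply=> [||i|i|i large_i].
  - by rewrite eps_le1 andbT ltW.
  - exact: ltW.
  - exact: ler0n.
  - exact: ler0n.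
  have := no_dev i; rewrite /large_class large_i /deviating_class -ltNge.
  exact: ltW.
have : #|S :&: E|%:R <= #|S|%:R :> R.
  by rewrite ler_nat subset_leq_card ?subsetIl.
nra.
Qed.

End Deviation.

Section ColouringBound.
Variables (R : realType) (V : finType) (E : {set {set V}}).
Variables (mu : {set {set V}} -> R) (p : R).
Hypotheses (mu_ge0 : forall S, 0 <= mu S) (indep : one_independent E mu).
Hypothesis mu_sum1 : \sum_S mu S = 1.
Hypothesis edge_prob : forall f, f \in E -> prob mu (fun S => f \in S) = p.

Lemma prob_few_edges_le (I : finType) (col : {set V} -> I) (eps : R) :
  (forall i, matching (colour_class E col i)) ->
  (0 < #|I|)%N -> (0 < #|E|)%N -> 0 < eps -> 0 < p -> p <= 1 ->
  prob mu (fun S => #|S|%:R <= (1 - 3 * eps) * p * #|E|%:R) <=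
  #|I|%:R * expR (- (eps ^+ 3 * p * #|E|%:R / (4 * #|I|%:R))).
Proof.
move=> proper_col I_gt0 E_gt0 eps_gt0 p_gt0 p_le1.
have n_neq0 : #|I|%:R != 0 :> R by rewrite pnatr_eq0 -lt0n.
apply: le_trans (prob_subset mu_ge0 (fun S =>
  few_edges_large_class_deviates col I_gt0 E_gt0 eps_gt0 p_gt0)) _.
apply: le_trans (prob_exists_le mu_ge0 _ _) _.
apply: le_trans (sumr_const_le _ (expR_ge0 _)); apply: ler_sum => i large_i.
apply: le_trans (chernoff_matching mu_ge0 indep mu_sum1 edge_prob
  (colour_class_sub E col i) (proper_col i) (ltW eps_gt0) (ltW p_gt0) p_le1) _.
rewrite ler_expR lerN2.
have -> : eps ^+ 3 * p * #|E|%:R / (4 * #|I|%:R) =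
          eps ^+ 2 * p * (eps * #|E|%:R / #|I|%:R) / 4 by field.
by rewrite ler_wpM2r ?invr_ge0 // ler_wpM2l // mulr_ge0 ?exprn_ge0 ?ltW.
Qed.

End ColouringBound.

Theorem lemma22 (R : realType) (eps p : R) (V : finType)
    (E : {set {set V}}) (mu : {set {set V}} -> R) :
  0 < eps -> 0 < p -> p <= 1 ->
  simple_graph E -> (0 < #|V|)%N ->
  2 * #|V|%:R / eps <= #|E|%:R ->
  M1p E p mu ->
  prob mu (fun S => #|S|%:R <= (1 - 3 * eps) * p * #|E|%:R)
  <= 4 * #|V|%:R * expR (- (eps ^+ 3 * p * #|E|%:R) / (6 * #|V|%:R)).
Proof.
move=> eps_gt0 p_gt0 p_le1 simpleE n_gt0 large_E.
move=> [[mu_ge0 [_ mu_sum1]] [indep edge_prob]].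
have n_pos : 0 < #|V|%:R :> R by rewrite ltr0n.
have E_gt0 : (0 < #|E|)%N.
  rewrite -(ltr0n R); apply: lt_le_trans large_E.
  by rewrite !mulr_gt0 ?invr_gt0.
apply: le_trans (prob_few_edges_le mu_ge0 indep mu_sum1 edge_prob
  (col := sum_colour n_gt0) _ _ E_gt0 eps_gt0 p_gt0 p_le1) _ => [c||].
- exact: sum_colour_matching.
- by rewrite card_ord.
rewrite card_ord; apply: ler_pM; rewrite ?expR_ge0 //.
  by rewrite ler_peMl ?ler1n.
rewrite ler_expR mulNr lerN2.
rewrite ler_wpM2l ?mulr_ge0 ?exprn_ge0 ?(ltW eps_gt0) ?(ltW p_gt0) //.
by rewrite lef_pV2 ?posrE ?mulr_gt0 // ler_pM2r // ler_nat.
Qed.
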